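(* Let $Q(z)=\sum_{i=0}^N a_iz^{N-i}$ ($a_0=1$) be a monic complex polynomial of degree $N\ge2$ with multiset of roots $S=\{\alpha_1,\dots,\alpha_N\}$. Then, with all equivalences $\sim$ holding up to positive constants depending only on $N$: (i) there is a root $\alpha\in S$ with $L_i(\alpha)\sim L_i$ for all integers $0\le i\le N/2$; (ii) for all integers $1\le r\le N/2$, $\Delta_r(\alpha_1,\dots,\alpha_N)\sim L_0L_1\cdots L_{r-1}$; (iii) for each such $r$ there exist a positive integer $h$ and polynomials $D_{r,1},\dots,D_{r,h}\in\mathbb{Z}[A_1,\dots,A_N]$ (depending only on $N,r$) such that $\Delta_r(\alpha_1,\dots,\alpha_N)\sim\sum_{q=1}^h|D_{r,q}(a_1,\dots,a_N)|^{1/q}$ for all such $Q$; (iv) for each $0\le k\le N-2$ there exist a positive integer $m_k$ and polynomials $\sigma_{k,i}\in\mathbb{Z}[A_1,\dots,A_N,Z]$, $1\le i\le m_k$ (depending only on $N,k$), such that for every root $\alpha$ of $Q$, $$\prod_{0\le i\le k}L_i(\alpha)\sim\sum_{i=1}^{m_k}|\sigma_{k,i}(a_1,\dots,a_N;\alpha)|^{1/i}.$$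
   Context: For a set $A\subseteq\mathbb{C}$, $d(A)=\sup_{\alpha,\beta\in A}|\alpha-\beta|$. Local cluster scales: for $\alpha\in S$ and $0\le k\le N-1$, $L_k(\alpha)=\inf d(S_{N-k}(\alpha))$ over sub-multisets $S_{N-k}(\alpha)\subseteq S$ with $N-k$ elements containing $\alpha$. Absolute cluster scales: $L_k=\inf_{\alpha\in S}L_k(\alpha)$, equivalently the minimum of $d(S_{N-k})$ over sub-multisets of $S$ with $N-k$ elements. The $r$-discriminant: $\Delta_r(\alpha_1,\dots,\alpha_N)=\sup\prod_{\nu=1}^r|\alpha_{i_\nu}-\alpha_{j_\nu}|$, the supremum over all $2r$-tuples $(i_1,\dots,i_r,j_1,\dots,j_r)$ of pairwise distinct integers in $\{1,\dots,N\}$. *)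

From HB Require Import structures.
From mathcomp Require Import all_boot all_order all_algebra.
From mathcomp Require Import complex.
From mathcomp Require Import Rstruct.
From mathcomp Require Import mathcomp_extra reals exp.
From mathcomp Require mpoly.
Set Implicit Arguments. Unset Strict Implicit. Unset Printing Implicit Defensive.
Import Order.TTheory GRing.Theory Num.Theory.
Local Open Scope ring_scope.

Notation RR := Rdefinitions.R.
Notation CC := (RR[i]).

Definition cnorm (x : CC) : RR := Normc.normc x.
Definition cdist (x y : CC) : RR := cnorm (x - y).

Section Defs.
Variable N : nat.
Implicit Types (al : 'I_N -> CC) (s : {set 'I_N}).

Definition diam al s : RR :=
  \big[Num.max/0]_(i in s) \big[Num.max/0]_(j in s) cdist (al i) (al j).

(* The seed diam al setT is an upper bound of every candidate, so for
   k <= N-1 (nonempty family) this is exactly the minimum. *)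
Definition Lloc al (k : nat) (j : 'I_N) : RR :=
  \big[Num.min/diam al setT]_(s : {set 'I_N} | (#|s| == N - k)%N && (j \in s))
     diam al s.

Definition Labs al (k : nat) : RR :=
  \big[Num.min/diam al setT]_(j : 'I_N) Lloc al k j.

(* r-discriminant: sup over injective t : 'I_(r+r) -> 'I_N,
   i_nu = t (lshift r nu), j_nu = t (rshift r nu) *)
Definition rdisc al (r : nat) : RR :=
  \big[Num.max/0]_(t : {ffun 'I_(r + r) -> 'I_N} | injectiveb t)
     \prod_(nu < r) cdist (al (t (lshift r nu))) (al (t (rshift r nu))).

Definition polyQ al : {poly CC} := \prod_(i < N) ('X - (al i)%:P).

(* coefficient vector (a_1, ..., a_N): index k : 'I_N stands for a_(k+1),
   the coefficient of z^(N-(k+1)) *)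
Definition coefs al (k : 'I_N) : CC := (polyQ al)`_(N - k.+1).

Definition evalA al (D : mpoly.mpoly N int) : CC :=
  mpoly.mmap (fun z : int => z%:~R) (coefs al) D.

Definition evalAZ al (z : CC) (D : mpoly.mpoly N.+1 int) : CC :=
  mpoly.mmap (fun c : int => c%:~R)
    (fun k : 'I_N.+1 => if unlift ord_max k is Some k' then coefs al k' else z) D.
End Defs.

Definition sim (c1 c2 A B : RR) : Prop := c1 * B <= A /\ A <= c2 * B.

Definition rootq (x : RR) (q : nat) : RR := powR x (q%:R)^-1.

From HB Require Import structures.
From mathcomp Require Import all_boot all_order all_algebra.
From mathcomp Require Import complex.
From mathcomp Require Import Rstruct.
From mathcomp Require Import mathcomp_extra reals exp.
From mathcomp Require Import mpoly.
From mathcomp Require Import zify ring lra.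
From mathcomp Require Import fingroup perm.
Import Order.TTheory GRing.Theory Num.Theory.
Local Open Scope ring_scope.
Set Implicit Arguments. Unset Strict Implicit. Unset Printing Implicit Defensive.

(* (i) Let alpha lie in an optimal cluster C of size N - N/2.  For i <= N/2
   an optimal (N - i)-cluster either contains alpha or meets C at some beta;
   exchanging a point of it for alpha gives, by the triangle inequality
   through beta, a cluster around alpha of diameter <= L_i + L_(N/2) <= 2 L_i.
   (ii) An optimal (N - mu)-cluster misses only mu roots, so it contains both
   ends of one of any mu + 1 disjoint pairs: Delta_r <= L_0 ... L_(r-1).
   Conversely, disjoint pairs with |alpha_a - alpha_b| >= 2^-(r+1) L_mu are
   chosen greedily; when the unused roots are all close together, an unused
   root u is far (>= L_r / 2) from more than r roots, hence from both ends of
   some chosen pair, and u replaces the nearer end, which is re-paired with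
   another unused root.
   (iii), (iv) Up to constants, both sides are the largest modulus in a finite
   family of polynomial expressions in the roots (and alpha) that is permuted
   by every permutation of the roots: the products prod_nu (alpha_(i_nu) - alpha_(j_nu))
   defining Delta_r, resp. the products prod_(b in T) (alpha - alpha_b) over
   (k + 1)-sets T, whose maximum is ~ L_0(alpha) ... L_k(alpha) by the same
   greedy argument.  The elementary symmetric functions e_q of such a family
   are integer polynomials in the coefficients (and alpha), and the Cauchy
   root bound gives max |x_i| ~ sum_q |e_q|^(1/q). *)

Lemma cnorm_ge0 x : 0 <= cnorm x.
Proof. by case: x => a b; rewrite /cnorm /Normc.normc sqrtr_ge0. Qed.

Lemma cnormD x y : cnorm (x + y) <= cnorm x + cnorm y.
Proof. exact: le_normcD. Qed.

Lemma cnormN x : cnorm (- x) = cnorm x.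
Proof. exact: normcN. Qed.

Lemma cnormM x y : cnorm (x * y) = cnorm x * cnorm y.
Proof. exact: Normc.normcM. Qed.

Lemma cnorm0 : cnorm 0 = 0.
Proof. exact: Normc.normc0. Qed.

Lemma cnorm1 : cnorm 1 = 1.
Proof. exact: Normc.normc1. Qed.

Lemma cnorm_prod (I : Type) (r : seq I) (P : pred I) (F : I -> CC) :
  cnorm (\prod_(i <- r | P i) F i) = \prod_(i <- r | P i) cnorm (F i).
Proof. exact: (big_morph cnorm cnormM cnorm1). Qed.

Lemma cnormX x n : cnorm (x ^+ n) = cnorm x ^+ n.
Proof. by elim: n => [|n IH]; rewrite ?expr0 ?cnorm1 // !exprS cnormM IH. Qed.

Lemma cnorm_sum (I : Type) (r : seq I) (P : pred I) (F : I -> CC) :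
  cnorm (\sum_(i <- r | P i) F i) <= \sum_(i <- r | P i) cnorm (F i).
Proof.
elim/big_rec2: _ => [|i y1 y2 _ h]; first by rewrite cnorm0.
by apply: le_trans (cnormD _ _) _; rewrite lerD2l.
Qed.

Lemma cdist_ge0 x y : 0 <= cdist x y.
Proof. exact: cnorm_ge0. Qed.

Lemma cdistC x y : cdist x y = cdist y x.
Proof. by rewrite /cdist -cnormN opprB. Qed.

Lemma cdist_triangle x y z : cdist x z <= cdist x y + cdist y z.
Proof. by rewrite /cdist; apply: le_trans (cnormD _ _); rewrite addrA subrK. Qed.

Lemma cdistxx x : cdist x x = 0.
Proof. by rewrite /cdist subrr cnorm0. Qed.

Lemma exists_subset_card (T : finType) (C : {set T}) j n :
  j \in C -> (0 < n <= #|C|)%N ->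
  exists2 S : {set T}, S \subset C & #|S| = n /\ j \in S.
Proof.
move=> jC /andP[n_gt0 n_le].
have : (n.-1 <= #|C :\ j|)%N by rewrite (cardsD1 j C) jC in n_le; lia.
case/card_geqP => s [s_uniq s_size sC].
have j_notin_s : j \notin [set x in s].
  by apply/negP; rewrite inE => /sC; rewrite !inE eqxx.
exists (j |: [set x in s]); last first.
  rewrite cardsU1 j_notin_s setU11 cardsE (card_uniqP s_uniq) s_size.
  by split=> //; lia.
apply/subsetP => x; rewrite !inE => /predU1P[-> //|/sC].
by rewrite !inE => /andP[].
Qed.

(** * Cluster scales *)

Section ClusterScales.
Variables (N : nat) (al : 'I_N -> CC).
Implicit Types (s T : {set 'I_N}) (j : 'I_N).

Lemma diam_ge0 s : 0 <= diam al s.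
Proof. exact: bigmax_ge_id. Qed.

Lemma diam_le s c : 0 <= c ->
  (forall i j, i \in s -> j \in s -> cdist (al i) (al j) <= c) -> diam al s <= c.
Proof. by move=> c_ge0 h; apply: bigmax_le => // i si; apply: bigmax_le => // j; apply: h. Qed.

Lemma diam_lt s c : 0 < c ->
  (forall i j, i \in s -> j \in s -> cdist (al i) (al j) < c) -> diam al s < c.
Proof. by move=> c_gt0 h; apply: bigmax_lt => // i si; apply: bigmax_lt => // j; apply: h. Qed.

Lemma cdist_le_diam s i j : i \in s -> j \in s -> cdist (al i) (al j) <= diam al s.
Proof. by move=> si sj; apply: bigmax_sup si _; apply: le_bigmax_cond. Qed.

Lemma diam_subset s1 s2 : s1 \subset s2 -> diam al s1 <= diam al s2.
Proof.
move/subsetP=> s12; apply: diam_le (diam_ge0 _) _ => i j si sj.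
by apply: cdist_le_diam; apply: s12.
Qed.

Lemma Lloc_ge0 k j : 0 <= Lloc al k j.
Proof. by apply: le_bigmin => [|s _]; apply: diam_ge0. Qed.

Lemma Lloc_le_diam k j s : #|s| = (N - k)%N -> j \in s -> Lloc al k j <= diam al s.
Proof. by move=> s_card js; apply: bigmin_le_cond; rewrite s_card eqxx js. Qed.

Lemma Lloc_witness k j : (k < N)%N ->
  exists s, [/\ #|s| = (N - k)%N, j \in s & Lloc al k j = diam al s].
Proof.
move=> k_lt_N; have [s _ [s_card js]] := @exists_subset_card _ setT j (N - k) (in_setT j)
  (ltac:(by rewrite cardsT card_ord; lia)).
pose P s := (#|s| == N - k)%N && (j \in s).
rewrite /Lloc -/P.
have [s' /andP[/eqP s'_card js'] ->] := eq_bigmin s P (diam al)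
  (ltac:(by rewrite /P s_card eqxx js)) (fun s _ => diam_subset (subsetT s)).
by exists s'.
Qed.

Lemma Labs_le_Lloc k j : Labs al k <= Lloc al k j.
Proof. exact: bigmin_le. Qed.

Lemma Labs_ge0 k : 0 <= Labs al k.
Proof. by apply: le_bigmin => [|j _]; [apply: diam_ge0 | apply: Lloc_ge0]. Qed.

Lemma Labs_witness k : (k < N)%N ->
  exists s, #|s| = (N - k)%N /\ Labs al k = diam al s.
Proof.
move=> k_lt_N; have j : 'I_N by exists k.
have Lloc_le_diamT j' : Lloc al k j' <= diam al setT.
  by apply: bigmin_le_id.
rewrite /Labs; have [j' _ ->] := eq_bigmin j xpredT (Lloc al k) isT (fun j _ => Lloc_le_diamT j).
by have [s [s_card _ ->]] := Lloc_witness j' k_lt_N; exists s.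
Qed.

Lemma Labs_le_diam k s : (k < N)%N -> #|s| = (N - k)%N -> Labs al k <= diam al s.
Proof.
move=> k_lt_N s_card; have : (0 < #|s|)%N by rewrite s_card subn_gt0.
by case/card_gt0P => j js; apply: le_trans (Labs_le_Lloc k j) (Lloc_le_diam s_card js).
Qed.

Lemma le_Labs i k : (i <= k)%N -> (k < N)%N -> Labs al k <= Labs al i.
Proof.
move=> i_le_k k_lt_N; have [s [s_card ->]] := Labs_witness (leq_ltn_trans i_le_k k_lt_N).
have : (0 < #|s|)%N by rewrite s_card; lia.
case/card_gt0P => j js.
have [s' s's [s'_card _]] := @exists_subset_card _ s j (N - k) js
  (ltac:(by rewrite s_card; lia)).
exact: le_trans (Labs_le_diam k_lt_N s'_card) (diam_subset s's).
Qed.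

Lemma card_ord_set s : (#|s| <= N)%N.
Proof. by rewrite -[X in (_ <= X)%N]card_ord max_card. Qed.

Lemma setI_card_gt0 s T : (N < #|s| + #|T|)%N -> (0 < #|s :&: T|)%N.
Proof. by move=> hN; have := cardsU s T; have := card_ord_set (s :|: T); lia. Qed.

Lemma Lloc_le_Labs_add i m j s : (i + m < N)%N -> #|s| = (N - m)%N ->
  Labs al m = diam al s -> j \in s -> Lloc al i j <= Labs al i + Labs al m.
Proof.
move=> im_lt_N s_card Lm_diam js.
have Lm_ge0 := Labs_ge0 m.
have [S [S_card Li_diam]] := Labs_witness (leq_ltn_trans (leq_addr m i) im_lt_N).
have [jS|jNS] := boolP (j \in S).
  by apply: le_trans (Lloc_le_diam S_card jS) _; rewrite -Li_diam lerDl.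
have : (0 < #|S :&: s|)%N by apply: setI_card_gt0; rewrite S_card s_card; lia.
case/card_gt0P => b; rewrite inE => /andP[bS bs].
have S'_card : #|j |: (S :\ b)| = (N - i)%N.
  by rewrite cardsU1 !inE negb_and jNS orbT; have := cardsD1 b S; rewrite bS S_card => ->.
apply: le_trans (Lloc_le_diam S'_card (setU11 _ _)) _.
have dist_j x : x \in S -> cdist (al j) (al x) <= Labs al i + Labs al m.
  move=> xS; rewrite addrC; apply: le_trans (cdist_triangle _ (al b) _) _.
  by apply: lerD; [rewrite Lm_diam | rewrite Li_diam]; apply: cdist_le_diam.
apply: diam_le => [|x y]; first by rewrite addr_ge0 ?Labs_ge0.
rewrite !inE => /predU1P[->|/andP[_ xS]] /predU1P[->|/andP[_ yS]].
- by rewrite cdistxx addr_ge0 ?Labs_ge0.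
- exact: dist_j.
- by rewrite cdistC; apply: dist_j.
- by apply: le_trans (cdist_le_diam xS yS) _; rewrite -Li_diam lerDl.
Qed.

Lemma exists_Lloc_le_2Labs : (0 < N)%N ->
  exists j, forall i, (i.*2 <= N)%N -> Lloc al i j <= 2 * Labs al i.
Proof.
move=> N_gt0; set m := N./2.
have m_lt_N : (m < N)%N by rewrite /m -divn2 ltn_Pdiv.
have [s [s_card Lm_diam]] := Labs_witness m_lt_N.
have : (0 < #|s|)%N by rewrite s_card subn_gt0.
case/card_gt0P => j js; exists j => i i_le.
have i_le_m : (i <= m)%N by rewrite /m -divn2 leq_divRL // muln2.
have [-> | i_neq_m] := eqVneq i m.
  by have := Lloc_le_diam s_card js; have := Labs_ge0 m; rewrite Lm_diam; lra.
have im_lt_N : (i + m < N)%N.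
  by have := odd_double_half N; rewrite -/m -addnn; move: i_le_m i_neq_m; lia.
apply: le_trans (Lloc_le_Labs_add im_lt_N s_card Lm_diam js) _.
by have := le_Labs i_le_m m_lt_N; lra.
Qed.

Definition far k j := [set b | (b != j) && (Lloc al k j <= 2 * cdist (al j) (al b))].

(* Otherwise N - k points, j among them, lie within Lloc k j / 2 of j and
   form a cluster of diameter < Lloc k j. *)
Lemma far_card k j : (k.+2 <= N)%N -> (k.+1 <= #|far k j|)%N.
Proof.
move=> k_lt; rewrite leqNgt; apply/negP => far_small.
have jC : j \in ~: far k j by rewrite !inE eqxx.
have [s sC [s_card js]] := @exists_subset_card _ _ j (N - k) jC
  (ltac:(by have := cardsC (far k j); rewrite card_ord; lia)).
have far_off x : x \in s -> x != j -> 2 * cdist (al j) (al x) < Lloc al k j.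
  by move=> xs xj; move/subsetP: sC => /(_ x xs); rewrite !inE xj /= -ltNge.
have [x xs xj] : exists2 x, x \in s & x != j.
  have : (1 < #|s|)%N by rewrite s_card; lia.
  case/card_gt1P => x [y [xs ys xy]].
  by have [<-|xj] := eqVneq x j; [exists y; rewrite // eq_sym | exists x].
have L_gt0 : 0 < Lloc al k j.
  by apply: le_lt_trans (far_off x xs xj); rewrite mulr_ge0 ?cdist_ge0.
have near y : y \in s -> 2 * cdist (al j) (al y) < Lloc al k j.
  by move=> ys; have [->|yj] := eqVneq y j; [rewrite cdistxx mulr0 | apply: far_off].
have : diam al s < Lloc al k j.
  apply: diam_lt => // a c a_s c_s; apply: le_lt_trans (cdist_triangle _ (al j) _) _.
  by move: (near a a_s) (near c c_s); rewrite cdistC; lra.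
by rewrite ltNge Lloc_le_diam.
Qed.

Definition star_prod j T := \prod_(b in T) cdist (al j) (al b).

Lemma star_prod_ge0 j T : 0 <= star_prod j T.
Proof. by apply: prodr_ge0 => b _; apply: cdist_ge0. Qed.

Lemma star_prod_le_prod_Lloc j n T : #|T| = n -> star_prod j T <= \prod_(i < n) Lloc al i j.
Proof.
elim: n T => [|n IH] T T_card; first by rewrite /star_prod (cards0_eq T_card) big_set0 big_ord0.
have n_lt_N : (n < N)%N by rewrite -T_card card_ord_set.
have [S [S_card jS L_diam]] := Lloc_witness j n_lt_N.
have : (0 < #|T :&: S|)%N by apply: setI_card_gt0; rewrite T_card S_card; lia.
case/card_gt0P => b; rewrite inE => /andP[bT bS].
rewrite /star_prod (bigD1 b) //= big_ord_recr /= mulrC L_diam.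
rewrite (eq_bigl (mem (T :\ b))) => [|x]; last by rewrite !inE andbC.
apply: ler_pM; rewrite ?star_prod_ge0 ?cdist_ge0 ?cdist_le_diam //.
by apply: IH; have := cardsD1 b T; rewrite bT T_card => -[].
Qed.

Lemma exists_star_prod_ge j m : (m < N)%N ->
  exists T, #|T| = m /\ \prod_(i < m) Lloc al i j <= 2 ^+ m * star_prod j T.
Proof.
elim: m => [|m IH] m_lt_N; first by exists set0; rewrite cards0 big_ord0 /star_prod big_set0 mulr1.
have [T [T_card T_bound]] := IH (ltnW m_lt_N).
have : (0 < #|far m j :\: T|)%N.
  rewrite cardsD; have := far_card j m_lt_N.
  by have := subset_leq_card (subsetIr (far m j) T); rewrite T_card; lia.
case/card_gt0P => b; rewrite !inE => /andP[bNT /andP[_ b_far]].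
exists (b |: T); split; first by rewrite cardsU1 bNT T_card.
rewrite big_ord_recr /= /star_prod (bigD1 b) ?setU11 //=.
rewrite (eq_bigl (fun x => x \in T)) => [|x]; last first.
  by rewrite !inE; case: eqVneq => [->|] /=; rewrite ?(negbTE bNT) ?andbT.
have P_ge0 : 0 <= \prod_(i < m) Lloc al i j by rewrite prodr_ge0 // => i _; apply: Lloc_ge0.
have := ler_pM P_ge0 (Lloc_ge0 m j) T_bound b_far.
move/le_trans; apply.
by rewrite exprS -/(star_prod j T) le_eqVlt; apply/orP; left; apply/eqP; ring.
Qed.

End ClusterScales.

(** * The r-discriminant *)

Lemma card_bigcup_le (I T : finType) (A : {pred I}) (F : I -> {set T}) :
  (#|\bigcup_(i in A) F i| <= \sum_(i in A) #|F i|)%N.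
Proof.
elim/big_rec2: _ => [|i B n _ IH]; first by rewrite cards0.
by apply: leq_trans (leq_card_setU _ _) _; rewrite leq_add2l.
Qed.

Lemma exists_pair_subset (I T : finType) (A : {pred I}) (x y : I -> T) (B : {set T}) :
  B \subset \bigcup_(i in A) [set x i; y i] -> (#|A| < #|B|)%N ->
  exists2 i, i \in A & (x i \in B) && (y i \in B).
Proof.
move=> B_sub B_big.
have [/exists_inP[i iA xyB] | /exists_inPn no_pair] :=
  boolP [exists i in A, (x i \in B) && (y i \in B)]; first by exists i.
suff : (#|B| <= #|A|)%N by rewrite leqNgt B_big.
have -> : B = \bigcup_(i in A) (B :&: [set x i; y i]).
  by rewrite -big_distrr /=; apply/esym/setIidPl.
apply: leq_trans (card_bigcup_le _ _) _; rewrite -sum1_card leq_sum // => i iA.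
have [xB|xNB] := boolP (x i \in B).
  have yNB : y i \notin B by move: (no_pair i iA); rewrite xB.
  rewrite -(cards1 (x i)); apply/subset_leq_card/subsetP => z.
  by rewrite !inE => /andP[zB /pred2P[->//|zy]]; move: yNB; rewrite -zy zB.
rewrite -(cards1 (y i)); apply/subset_leq_card/subsetP => z.
by rewrite !inE => /andP[zB /pred2P[zx|->//]]; move: xNB; rewrite -zx zB.
Qed.

Definition swapn (p q i : nat) := if i == p then q else if i == q then p else i.

Lemma swapnK p q : involutive (swapn p q).
Proof.
move=> i; rewrite /swapn.
have [<-|ip] := eqVneq i p; first by have [->|_] := eqVneq q i; rewrite ?eqxx.
have [<-|iq] := eqVneq i q; first by rewrite eq_sym (negbTE ip) eqxx.
by rewrite (negbTE ip) (negbTE iq).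
Qed.

Lemma swapn_lt n p q i : (p < n)%N -> (q < n)%N -> (i < n)%N -> (swapn p q i < n)%N.
Proof. by rewrite /swapn; case: ifP => //; case: ifP. Qed.

Section Matchings.
Variable T : finType.
Implicit Types (f : nat -> T) (r : nat).

(* A matching of r pairs is encoded by f : nat -> T, pair nu being
   (f nu.*2, f nu.*2.+1). *)
Definition matching r f : Prop := {in [pred i | (i < r.*2)%N] &, injective f}.

Definition pairs_set r f : {set T} := \bigcup_(nu < r) [set f nu.*2; f nu.*2.+1].

Definition add_pair r f (x y : T) i := if i == r.*2 then x else if i == r.*2.+1 then y else f i.

Lemma mem_pairs_set r f i : (i < r.*2)%N -> f i \in pairs_set r f.
Proof.
move=> i_lt; have i2_lt : (i./2 < r)%N by rewrite -divn2 ltn_divLR // muln2.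
apply/bigcupP; exists (Ordinal i2_lt) => //=; rewrite !inE.
apply/orP; have := odd_double_half i; rewrite -addnn.
by case: (odd i) => /= e; [right | left]; apply/eqP; congr f; lia.
Qed.

Lemma card_pairs_set r f : (#|pairs_set r f| <= r.*2)%N.
Proof.
apply: leq_trans (card_bigcup_le _ _) _; rewrite -muln2 -[r in (r * 2)%N]card_ord -sum_nat_const.
by apply: leq_sum => nu _; rewrite cards2; case: eqVneq.
Qed.

Lemma add_pair_lt r f x y i : (i < r.*2)%N -> add_pair r f x y i = f i.
Proof. by move=> i_lt; rewrite /add_pair ltn_eqF // ltn_eqF // ltnW. Qed.

Lemma add_pair_fst r f x y : add_pair r f x y r.*2 = x.
Proof. by rewrite /add_pair eqxx. Qed.

Lemma add_pair_snd r f x y : add_pair r f x y r.*2.+1 = y.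
Proof. by rewrite /add_pair gtn_eqF // eqxx. Qed.

Lemma matching_add_pair r f x y : matching r f ->
  x \notin pairs_set r f -> y \notin pairs_set r f -> x != y ->
  matching r.+1 (add_pair r f x y).
Proof.
move=> f_inj x_out y_out xy.
have old_neq z i : z \notin pairs_set r f -> (i < r.*2)%N -> f i != z.
  by move=> z_out i_lt; apply: contraNneq z_out => <-; apply: mem_pairs_set.
have split k : (k < r.+1.*2)%N -> k = r.*2 \/ k = r.*2.+1 \/ (k < r.*2)%N.
  by rewrite doubleS; move: (r.*2) => m; lia.
move=> i j; rewrite !inE => /split[->|[->|i_lt]] /split[->|[->|j_lt]] //;
  rewrite ?add_pair_fst ?add_pair_snd ?add_pair_lt //.
- by move/eqP; rewrite (negbTE xy).
- by move/eqP; rewrite eq_sym (negbTE (old_neq _ _ x_out j_lt)).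
- by move/eqP; rewrite eq_sym (negbTE xy).
- by move/eqP; rewrite eq_sym (negbTE (old_neq _ _ y_out j_lt)).
- by move/eqP; rewrite (negbTE (old_neq _ _ x_out i_lt)).
- by move/eqP; rewrite (negbTE (old_neq _ _ y_out i_lt)).
- exact: f_inj.
Qed.

Lemma matching_swap r f p q : matching r f -> (p < r.*2)%N -> (q < r.*2)%N ->
  matching r (f \o swapn p q).
Proof.
move=> f_inj p_lt q_lt i j; rewrite !inE => i_lt j_lt /f_inj.
by rewrite !inE !swapn_lt // => /(_ isT isT) /(can_inj (swapnK p q)).
Qed.

End Matchings.

Lemma double_eq_odd m n : (m.*2 == n.*2.+1) = false.
Proof. by apply/eqP => /(congr1 odd); rewrite /= !odd_double. Qed.

Lemma odd_eq_double m n : (m.*2.+1 == n.*2) = false.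
Proof. by rewrite eq_sym double_eq_odd. Qed.

Lemma pairs_set_flip (T : finType) r (f : nat -> T) nu : (nu < r)%N ->
  pairs_set r (f \o swapn nu.*2 nu.*2.+1) = pairs_set r f.
Proof.
move=> nu_lt; apply: eq_bigr => mu _; rewrite /= /swapn eqSS !(inj_eq double_inj).
rewrite double_eq_odd odd_eq_double.
by case: eqVneq => [->|_]; rewrite ?eqxx ?double_eq_odd //= setUC.
Qed.

Section Discriminant.
Variables (N : nat) (al : 'I_N -> CC).

Lemma prod_pairs_le_prod_Labs r (t : {ffun 'I_(r + r) -> 'I_N}) n (A : {set 'I_r}) :
  injective t -> #|A| = n ->
  \prod_(nu in A) cdist (al (t (lshift r nu))) (al (t (rshift r nu))) <= \prod_(i < n) Labs al i.
Proof.
move=> t_inj; have rr_le_N : (r + r <= N)%N by have := leq_card t t_inj; rewrite !card_ord.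
elim: n A => [|n IH] A A_card; first by rewrite (cards0_eq A_card) big_set0 big_ord0.
have n_lt_r : (n < r)%N by rewrite -A_card -[X in (_ <= X)%N]card_ord max_card.
have n_lt_N : (n < N)%N by lia.
have [S [S_card L_diam]] := Labs_witness al n_lt_N.
have [nu nuA /andP[l_in_S r_in_S]] :
    exists2 nu, nu \in A & (t (lshift r nu) \in S) && (t (rshift r nu) \in S).
  have [/exists_inP[nu nuA h] | /exists_inPn none] :=
    boolP [exists nu in A, (t (lshift r nu) \in S) && (t (rshift r nu) \in S)].
    by exists nu.
  exfalso; pose g nu := if t (lshift r nu) \in S then t (rshift r nu) else t (lshift r nu).
  have g_inj : {in A &, injective g}.
    by move=> x y _ _; rewrite /g; do 2 case: ifP => _; move/t_inj/eqP; rewrite eq_shift => // /eqP.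
  have g_out : [set g nu | nu in A] \subset ~: S.
    apply/subsetP => _ /imsetP[nu nuA ->]; move: (none nu nuA); rewrite inE /g.
    by case: ifP => [_ //| /negbT].
  have SC_card : #|~: S| = n by have := cardsC S; rewrite S_card card_ord; lia.
  by have := subset_leq_card g_out; rewrite card_in_imset // A_card SC_card ltnn.
rewrite (bigD1 nu) //= big_ord_recr /= mulrC L_diam.
rewrite (eq_bigl (mem (A :\ nu))) => [|x]; last by rewrite !inE andbC.
apply: ler_pM; rewrite ?prodr_ge0 ?cdist_ge0 ?cdist_le_diam //.
- by move=> i _; apply: cdist_ge0.
- by apply: IH; have := cardsD1 nu A; rewrite nuA A_card => -[].
Qed.

Lemma rdisc_le_prod_Labs r : rdisc al r <= \prod_(i < r) Labs al i.
Proof.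
apply: bigmax_le => [|t /injectiveP t_inj]; first by rewrite prodr_ge0 // => i _; apply: Labs_ge0.
have := @prod_pairs_le_prod_Labs r t r setT t_inj (ltac:(by rewrite cardsT card_ord)).
by rewrite (eq_bigl xpredT) // => nu; rewrite in_setT.
Qed.

Definition pair_dist (f : nat -> 'I_N) mu := cdist (al (f mu.*2)) (al (f mu.*2.+1)).

Definition pairs_spread r (f : nat -> 'I_N) K :=
  forall mu, (mu < r)%N -> Labs al mu <= K * pair_dist f mu.

Lemma pairs_spread_le r f K K' : K <= K' -> pairs_spread r f K -> pairs_spread r f K'.
Proof.
move=> KK' f_spread mu mu_lt; apply: le_trans (f_spread mu mu_lt) _.
by rewrite ler_wpM2r ?cdist_ge0.
Qed.

Lemma pairs_spread_flip r f K nu : (nu < r)%N -> pairs_spread r f K ->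
  pairs_spread r (f \o swapn nu.*2 nu.*2.+1) K.
Proof.
move=> nu_lt f_spread mu mu_lt; rewrite /pair_dist /= /swapn eqSS !(inj_eq double_inj).
rewrite double_eq_odd odd_eq_double.
case: eqVneq => [->|_]; rewrite ?eqxx ?double_eq_odd //=.
  by rewrite cdistC; exact: f_spread nu nu_lt.
exact: f_spread mu mu_lt.
Qed.

Lemma pair_dist_add_pair_lt r f x y mu : (mu < r)%N ->
  pair_dist (add_pair r f x y) mu = pair_dist f mu.
Proof. by move=> mu_lt; rewrite /pair_dist !add_pair_lt // ?ltn_Sdouble ?ltn_double. Qed.

Lemma pair_dist_add_pair r f x y : pair_dist (add_pair r f x y) r = cdist (al x) (al y).
Proof. by rewrite /pair_dist add_pair_fst add_pair_snd. Qed.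

Lemma pairs_spread_add_pair r f K x y : 2 <= K -> pairs_spread r f K ->
  Labs al r <= 4 * cdist (al x) (al y) -> pairs_spread r.+1 (add_pair r f x y) (2 * K).
Proof.
move=> K_ge2 f_spread r_far mu; rewrite ltnS leq_eqVlt => /predU1P[->|mu_lt].
  rewrite pair_dist_add_pair; apply: le_trans r_far _.
  by rewrite ler_wpM2r ?cdist_ge0 //; lra.
rewrite pair_dist_add_pair_lt //; apply: (pairs_spread_le _ f_spread) => //; lra.
Qed.

(* u replaces the end f nu.*2.+1 of pair nu, the end nearer to u, and that
   end is paired with v instead. *)
Lemma exists_spread_augment r f K nu u v :
  matching r f -> pairs_spread r f K -> 2 <= K -> (nu < r)%N ->
  u \notin pairs_set r f -> v \notin pairs_set r f -> u != v ->
  4 * cdist (al u) (al v) <= Labs al r ->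
  Labs al r <= 2 * cdist (al u) (al (f nu.*2.+1)) ->
  cdist (al u) (al (f nu.*2.+1)) <= cdist (al u) (al (f nu.*2)) ->
  exists f', matching r.+1 f' /\ pairs_spread r.+1 f' (2 * K).
Proof.
move=> f_match f_spread K_ge2 nu_lt u_out v_out uv uv_close u_far closer.
have nu2_lt : (nu.*2.+1 < r.+1.*2)%N by rewrite ltn_Sdouble ltnW.
exists (add_pair r f v u \o swapn nu.*2.+1 r.*2.+1); split.
  apply: matching_swap; rewrite ?doubleS //.
  by apply: matching_add_pair; rewrite // eq_sym.
have d_ge0 := cdist_ge0; have L_ge0 := Labs_ge0.
move=> mu; rewrite ltnS leq_eqVlt => /predU1P[->|mu_lt].
  rewrite /pair_dist /= /swapn !double_eq_odd eqSS (inj_eq double_inj) (gtn_eqF nu_lt) eqxx.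
  rewrite add_pair_fst add_pair_lt; last by rewrite ltn_Sdouble.
  have := cdist_triangle (al u) (al v) (al (f nu.*2.+1)).
  have : 4 * cdist (al v) (al (f nu.*2.+1)) <= 2 * K * cdist (al v) (al (f nu.*2.+1)).
    by rewrite ler_wpM2r //; lra.
  lra.
rewrite /pair_dist /= /swapn !double_eq_odd !eqSS !(inj_eq double_inj) (ltn_eqF mu_lt).
rewrite add_pair_lt ?ltn_double //.
have [-> | mu_nu] := eqVneq mu nu; last first.
  rewrite add_pair_lt ?ltn_Sdouble //.
  by apply: (pairs_spread_le _ f_spread mu_lt); lra.
rewrite add_pair_snd.
have := f_spread nu nu_lt; rewrite /pair_dist.
have := cdist_triangle (al (f nu.*2)) (al u) (al (f nu.*2.+1)).
rewrite (cdistC (al (f nu.*2)) (al u)).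
have := d_ge0 (al (f nu.*2)) (al (f nu.*2.+1)); have := L_ge0 nu; nra.
Qed.

Lemma exists_pair_far r f u : (r.+2 <= N)%N ->
  (forall x, x \notin pairs_set r f -> u != x -> 4 * cdist (al u) (al x) < Labs al r) ->
  exists2 nu, (nu < r)%N & Labs al r <= 2 * cdist (al u) (al (f nu.*2)) /\
                           Labs al r <= 2 * cdist (al u) (al (f nu.*2.+1)).
Proof.
move=> r_lt close; have L_le := Labs_le_Lloc al r u.
have far_sub : far al r u \subset \bigcup_(nu < r) [set f nu.*2; f nu.*2.+1].
  apply/subsetP => x; rewrite inE => /andP[xu x_far]; apply: contraT => xU.
  by have := close x xU (ltac:(by rewrite eq_sym)); have := cdist_ge0 (al u) (al x); lra.
have [nu _ /andP[]] := exists_pair_subset far_sub (ltac:(by rewrite card_ord; apply: far_card)).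
rewrite !inE => /andP[_ a_far] /andP[_ b_far].
by exists nu => //; split; apply: le_trans L_le _.
Qed.

Lemma exists_spread_matching r : (0 < N)%N -> (r.*2 <= N)%N ->
  exists f, matching r f /\ pairs_spread r f (2 ^+ r.+1).
Proof.
move=> N_gt0; elim: r => [|r IH] r_le; first by exists (fun=> Ordinal N_gt0); split.
have [f [f_match f_spread]] := IH (ltac:(by rewrite doubleS in r_le; lia)).
set U := pairs_set r f.
have K_ge2 : 2 <= 2 ^+ r.+1 :> RR.
  by rewrite exprS ler_peMr ?exprn_ege1 //; lra.
rewrite exprS.
have [/existsP[x /existsP[y /and4P[xU yU xy xy_far]]] | none] :=
  boolP [exists x, exists y, [&& x \notin U, y \notin U, x != y &
                              Labs al r <= 4 * cdist (al x) (al y)]].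
  exists (add_pair r f x y); split; first exact: matching_add_pair.
  exact: pairs_spread_add_pair.
have close x y : x \notin U -> y \notin U -> x != y -> 4 * cdist (al x) (al y) < Labs al r.
  move=> xU yU xy; rewrite ltNge; apply: contraNN none => xy_far.
  by apply/existsP; exists x; apply/existsP; exists y; rewrite xU yU xy.
have : (1 < #|~: U|)%N.
  by have := cardsC U; have := card_pairs_set r f; move: r_le; rewrite card_ord doubleS -/U; lia.
case/card_gt1P => u [v]; rewrite !inE => -[uU vU uv].
have [nu nu_lt [a_far b_far]] := exists_pair_far (r := r) (f := f)
  (ltac:(by move: r_le; rewrite doubleS -addnn; lia))
  (fun x => close u x uU).
have uv_close := close u v uU vU uv.
have [closer | farther] := leP (cdist (al u) (al (f nu.*2.+1))) (cdist (al u) (al (f nu.*2))).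
  by apply: (exists_spread_augment f_match f_spread K_ge2 nu_lt uU vU uv); lra.
apply: (exists_spread_augment (u := u) (v := v) (matching_swap f_match _ _)
  (pairs_spread_flip nu_lt f_spread) K_ge2 nu_lt);
  rewrite ?pairs_set_flip //= /swapn ?eqxx ?odd_eq_double ?ltn_Sdouble ?ltn_double //; lra.
Qed.

Lemma prod_pair_dist_le_rdisc r f : matching r f -> \prod_(mu < r) pair_dist f mu <= rdisc al r.
Proof.
move=> f_match.
pose idx (i : 'I_(r + r)) := if (i < r)%N then i.*2 else (i - r).*2.+1.
have idx_lt i : (idx i < r.*2)%N.
  by rewrite /idx -!addnn; have := ltn_ord i; case: (ltnP i r); lia.
have idx_inj : injective idx.
  move=> i j; rewrite /idx -!addnn => e; apply: ord_inj.
  by move: e; have := ltn_ord i; have := ltn_ord j; case: (ltnP i r); case: (ltnP j r); lia.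
pose t := [ffun i => f (idx i)].
have t_inj : injectiveb t.
  by apply/injectiveP => i j; rewrite !ffunE => /f_match; rewrite !inE !idx_lt => /(_ isT isT)/idx_inj.
apply: (bigmax_sup t) => //; rewrite le_eqVlt; apply/orP; left; apply/eqP.
apply: eq_bigr => nu _; rewrite !ffunE /idx /= ltn_ord.
by rewrite ltnNge leq_addr /= addKn.
Qed.

Lemma prod_Labs_le_rdisc r : (0 < N)%N -> (r.*2 <= N)%N ->
  \prod_(i < r) Labs al i <= 2 ^+ (r.+1 * r) * rdisc al r.
Proof.
move=> N_gt0 r_le; have [f [f_match f_spread]] := exists_spread_matching N_gt0 r_le.
apply: le_trans (_ : _ <= \prod_(mu < r) (2 ^+ r.+1 * pair_dist f mu)) _.
  by apply: ler_prod => mu _; rewrite Labs_ge0 f_spread.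
rewrite prodrMl card_ord -exprM ler_wpM2l ?exprn_ge0 //.
exact: prod_pair_dist_le_rdisc.
Qed.

End Discriminant.

(** * Elementary symmetric functions and the Cauchy bound *)

Definition esymf (R : comNzRingType) (I : finType) (x : I -> R) q :=
  \sum_(A : {set I} | #|A| == q) \prod_(i in A) x i.

Section ElementarySymmetric.
Variables (R : comNzRingType) (I : finType).
Implicit Types (x : I -> R).

Lemma esymf0 x : esymf x 0 = 1.
Proof.
rewrite /esymf (eq_bigl (pred1 set0)) => [|A]; last by rewrite /= cards_eq0.
by rewrite big_pred1_eq big_set0.
Qed.

Lemma rmorph_esymf (S : comNzRingType) (f : {rmorphism R -> S}) x q :
  f (esymf x q) = esymf (f \o x) q.
Proof. by rewrite rmorph_sum; apply: eq_bigr => A _; rewrite rmorph_prod. Qed.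

Lemma esymf_reindex x (s : I -> I) q : injective s -> esymf (x \o s) q = esymf x q.
Proof.
move=> s_inj; rewrite /esymf [RHS](reindex_inj (imset_inj s_inj)) /=.
apply: eq_big => A; first by rewrite card_imset.
by move=> _; rewrite big_imset //= => i j _ _; apply: s_inj.
Qed.

Lemma prod_subX_esymf x z :
  \prod_i (z - x i) = \sum_(q < #|I|.+1) (-1) ^+ q * esymf x q * z ^+ (#|I| - q).
Proof.
rewrite (eq_bigr (fun i => - x i + z)) => [|i _]; last by rewrite addrC.
rewrite bigA_distr (partition_big (fun A : {set I} => inord #|A| : 'I_#|I|.+1) xpredT) //=.
apply: eq_bigr => q _; rewrite /esymf mulr_sumr mulr_suml; apply: eq_big => A.
  have A_lt : (#|A| < #|I|.+1)%N by rewrite ltnS max_card.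
  by apply/eqP/eqP => [<-|->]; rewrite ?inordK //; apply: val_inj; rewrite /= inordK.
move=> /eqP A_q; have A_card : #|A| = q by rewrite -A_q inordK // ltnS max_card.
rewrite (bigID (mem A)) /=.
have -> : \prod_(i | i \in A) (if i \in A then - x i else z) = \prod_(i in A) - x i.
  by apply: eq_bigr => i ->.
have -> : \prod_(i | i \notin A) (if i \in A then - x i else z) = \prod_(i in ~: A) z.
  by apply: eq_big => i; rewrite ?inE // => /negbTE ->.
rewrite prodrN prodr_const A_card.
by have -> : #|~: A| = (#|I| - q)%N by have := cardsC A; rewrite A_card; lia.
Qed.

Lemma esymf_fixed x (f : {rmorphism R -> R}) (s : I -> I) q :
  injective s -> (forall i, f (x i) = x (s i)) -> f (esymf x q) = esymf x q.
Proof.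
move=> s_inj fx; rewrite rmorph_esymf -[RHS](esymf_reindex _ _ s_inj).
by apply: eq_bigr => A _; apply: eq_bigr => i _; apply: fx.
Qed.

End ElementarySymmetric.

Lemma sum_geometric2 (b : RR) M :
  \sum_(q < M) b ^+ q.+1 * (2 * b) ^+ (M - q.+1) = (2 * b) ^+ M - b ^+ M.
Proof.
elim: M => [|M IH]; first by rewrite big_ord0 !expr0 subrr.
rewrite big_ord_recr /= subnn expr0 mulr1.
rewrite (eq_bigr (fun q : 'I_M => 2 * b * (b ^+ q.+1 * (2 * b) ^+ (M - q.+1)))).
  by rewrite -mulr_sumr IH !exprS; ring.
by move=> q _; rewrite /= subSS -subnSK // [(2 * b) ^+ _.+1]exprS; ring.
Qed.

(* If |e_q(x)| <= B^q for all q, a root z of prod (Z - x_i) with |z| > 2B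
   would satisfy |z|^M <= sum_q B^q |z|^(M-q) < |z|^M. *)
Lemma cauchy_root_bound (I : finType) (x : I -> CC) (B : RR) : 0 <= B ->
  (forall q, (0 < q <= #|I|)%N -> cnorm (esymf x q) <= B ^+ q) ->
  forall i, cnorm (x i) <= 2 * B.
Proof.
move=> B_ge0 esymf_le i0; rewrite leNgt; apply/negP => big.
set w := cnorm (x i0) in big; set b := w / 2; set M := #|I|.
have b_gt_B : B < b by rewrite /b; lra.
have w2b : w = 2 * b by rewrite /b; field.
have M_gt0 : (0 < M)%N by apply/card_gt0P; exists i0.
have := prod_subX_esymf x (x i0); rewrite (bigD1 i0) //= subrr mul0r.
rewrite big_ord_recl /= expr0 mul1r esymf0 mul1r subn0 => /esym/eqP; rewrite addr_eq0 => /eqP ez.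
have : w ^+ M <= \sum_(q < M) b ^+ q.+1 * (2 * b) ^+ (M - q.+1).
  rewrite /w -cnormX -/M ez cnormN; apply: le_trans (cnorm_sum _ _ _) _.
  apply: ler_sum => q _; rewrite !cnormM !cnormX cnormN cnorm1 expr1n mul1r -/w w2b.
  rewrite ler_wpM2r ?exprn_ge0 //; first by lra.
  apply: le_trans (esymf_le q.+1 _) _; first by rewrite ltn_ord.
  by rewrite lerXn2r ?nnegrE //; lra.
rewrite sum_geometric2 -w2b; have : 0 < b ^+ M by rewrite exprn_gt0 //; lra.
lra.
Qed.

Lemma rootq_ge0 x q : 0 <= rootq x q.
Proof. exact: powR_ge0. Qed.

Lemma rootqX x q : 0 <= x -> (0 < q)%N -> rootq x q ^+ q = x.
Proof.
move=> x_ge0 q_gt0; rewrite /rootq -powR_mulrn ?powR_ge0 // -powRrM mulVf ?powRr1 //.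
by rewrite pnatr_eq0 -lt0n.
Qed.

Lemma rootq_le x q B : 0 <= x -> 0 <= B -> (0 < q)%N -> x <= B ^+ q -> rootq x q <= B.
Proof.
move=> x_ge0 B_ge0 q_gt0 x_le; rewrite leNgt; apply/negP => lt_root.
have : B ^+ q < rootq x q ^+ q by rewrite ltrXn2r ?rootq_ge0 // -lt0n q_gt0.
by rewrite rootqX // ltNge x_le.
Qed.

Section RootSums.
Variables (I : finType) (x : I -> CC).

Definition maxnorm := \big[Num.max/0]_i cnorm (x i).

Definition root_sum := \sum_(q < #|I|) rootq (cnorm (esymf x q.+1)) q.+1.

Lemma maxnorm_ge0 : 0 <= maxnorm.
Proof. exact: bigmax_ge_id. Qed.

Lemma cnorm_le_maxnorm i : cnorm (x i) <= maxnorm.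
Proof. exact: le_bigmax. Qed.

Lemma root_sum_ge0 : 0 <= root_sum.
Proof. by apply: sumr_ge0 => q _; apply: rootq_ge0. Qed.

Lemma maxnorm_le_root_sum : maxnorm <= 2 * root_sum.
Proof.
apply: bigmax_le => [|i _]; first by have := root_sum_ge0; lra.
apply: cauchy_root_bound root_sum_ge0 _ i => q /andP[q_gt0 q_le].
rewrite -(rootqX (cnorm_ge0 _) q_gt0) lerXn2r ?nnegrE ?rootq_ge0 ?root_sum_ge0 //.
have q_lt : (q.-1 < #|I|)%N by lia.
rewrite /root_sum (bigD1 (Ordinal q_lt)) //= prednK // lerDl.
by apply: sumr_ge0 => j _; apply: rootq_ge0.
Qed.

Lemma cnorm_esymf_le q : cnorm (esymf x q) <= #|{set I}|%:R * maxnorm ^+ q.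
Proof.
apply: le_trans (cnorm_sum _ _ _) _.
apply: le_trans (_ : _ <= \sum_(A : {set I} | #|A| == q) maxnorm ^+ q) _.
  apply: ler_sum => A /eqP <-; rewrite cnorm_prod -prodr_const.
  by apply: ler_prod => i _; rewrite cnorm_ge0 cnorm_le_maxnorm.
by rewrite sumr_const mulr_natl; apply/ler_wpMn2l/max_card/exprn_ge0/maxnorm_ge0.
Qed.

Lemma root_sum_le_maxnorm : root_sum <= #|I|%:R * #|{set I}|%:R * maxnorm.
Proof.
have K_ge1 : 1 <= #|{set I}|%:R :> RR by rewrite ler1n; apply/card_gt0P; exists set0.
have m_ge0 := maxnorm_ge0.
apply: le_trans (_ : _ <= \sum_(q < #|I|) #|{set I}|%:R * maxnorm) _; last first.
  by rewrite sumr_const card_ord -mulrA [X in _ <= X]mulr_natl.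
apply: ler_sum => q _; apply: rootq_le => //; first exact: cnorm_ge0.
  by rewrite mulr_ge0 //; lra.
apply: le_trans (cnorm_esymf_le q.+1) _.
rewrite exprMn ler_wpM2r ?exprn_ge0 //.
by rewrite -[X in X <= _]expr1; apply: ler_weXn2l.
Qed.

End RootSums.

Lemma sim_trans c1 c2 d1 d2 A B C : 0 <= c1 -> 0 <= c2 ->
  sim c1 c2 A B -> sim d1 d2 B C -> sim (c1 * d1) (c2 * d2) A C.
Proof.
move=> c1_ge0 c2_ge0 [AB1 AB2] [BC1 BC2]; split.
  by rewrite -mulrA; apply: le_trans AB1; rewrite ler_wpM2l.
by apply: le_trans AB2 _; rewrite -mulrA ler_wpM2l.
Qed.

Lemma exists_sim_root_sum (I : finType) : (0 < #|I|)%N ->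
  exists c1 c2, [/\ 0 < c1, 0 < c2 & forall x : I -> CC, sim c1 c2 (maxnorm x) (root_sum x)].
Proof.
move=> I_gt0; set M : RR := #|I|%:R * #|{set I}|%:R.
have M_gt0 : 0 < M by rewrite mulr_gt0 ?ltr0n //; apply/card_gt0P; exists set0.
exists M^-1, 2; split; rewrite ?invr_gt0 // => x; split; last exact: maxnorm_le_root_sum.
by rewrite ler_pdivrMl //; apply: root_sum_le_maxnorm.
Qed.

(** * Polynomial expressions in the coefficients *)

Lemma mmap_ext n (h1 h2 : 'I_n -> CC) (p : {mpoly int[n]}) :
  h1 =1 h2 -> mmap intr h1 p = mmap intr h2 p.
Proof. by move=> h12; apply: eq_bigr => m _; congr (_ * _); apply: mmap1_eq. Qed.

Lemma mmap_comp n k (p : {mpoly int[n]}) (lq : n.-tuple {mpoly int[k]}) (h : 'I_k -> CC) :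
  mmap intr h (p \mPo lq) = mmap intr (fun i => mmap intr h (tnth lq i)) p.
Proof.
rewrite comp_mpolyEX raddf_sum /= {2}/mmap; apply: eq_bigr => m _.
rewrite mmapZ comp_mpolyX rmorph_prod /mmap1; congr (_ * _).
by apply: eq_bigr => i _; rewrite rmorphXn.
Qed.

Lemma mmap_mesym n (h : 'I_n -> CC) k : mmap intr h (mesym n int k) = esymf h k.
Proof.
rewrite rmorph_sum; apply: eq_bigr => A _; rewrite rmorph_prod.
by apply: eq_bigr => i _ /=; rewrite mmapX mmap1U.
Qed.

Lemma meval_mesym n (h : 'I_n -> CC) k : (mesym n CC k).@[h] = esymf h k.
Proof.
rewrite rmorph_sum; apply: eq_bigr => A _ /=.
by rewrite (big_morph _ (@mevalM n CC h) (meval1 h)); apply: eq_bigr => i _; rewrite mevalXU.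
Qed.

Lemma coefs_esymf N (al : 'I_N -> CC) (i : 'I_N) :
  coefs al i = (-1) ^+ i.+1 * esymf al i.+1.
Proof.
have i_lt : (i.+1 < N.+1)%N by rewrite ltnS.
have := mroots_coeff [tuple al i | i < N] (inord i.+1).
rewrite inordK // big_tuple (eq_bigr (fun j => 'X - (al j)%:P)) /coefs /polyQ => [->|j _].
  by rewrite -meval_mesym; congr (_ * _); apply: meval_eq => j; rewrite tnth_mktuple.
by rewrite tnth_mktuple.
Qed.

(* A symmetric p equals symf p evaluated at the elementary symmetric
   polynomials e_(i+1) = (-1)^(i+1) a_(i+1), so it is a polynomial in the a_i. *)
Definition coef_poly N (p : {mpoly int[N]}) : {mpoly int[N]} :=
  symf p \mPo [tuple ((-1) ^+ i.+1 : int) *: 'X_i | i < N].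

Lemma evalA_coef_poly N (al : 'I_N -> CC) (p : {mpoly int[N]}) : p \is symmetric ->
  evalA al (coef_poly p) = mmap intr al p.
Proof.
move=> p_sym; rewrite /evalA -/(mmap intr (coefs al) _) mmap_comp.
rewrite {2}(symfP p_sym) mmap_comp; apply: mmap_ext => i.
rewrite !tnth_mktuple mmapZ mmapX mmap1U coefs_esymf mmap_mesym mulrA.
by rewrite rmorphXn rmorphN rmorph1 -exprMn mulrNN mulr1 expr1n mul1r.
Qed.

Definition coef_polyZ N (p : {poly {mpoly int[N]}}) : {mpoly int[N.+1]} :=
  \sum_(d < size p) (coef_poly p`_d \mPo [tuple 'X_(lift ord_max i) | i < N]) * 'X_ord_max ^+ d.

Lemma evalAZ_coef_polyZ N (al : 'I_N -> CC) z (p : {poly {mpoly int[N]}}) :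
  (forall d, p`_d \is symmetric) -> evalAZ al z (coef_polyZ p) = (map_poly (mmap intr al) p).[z].
Proof.
move=> p_sym; rewrite /evalAZ -/(mmap intr _ _) rmorph_sum /=.
rewrite (@horner_coef_wide _ (size p)); last exact: size_poly.
apply: eq_bigr => d _; rewrite rmorphM rmorphXn /= mmapX mmap1U unlift_none coef_map /=.
congr (_ * _); rewrite mmap_comp -(evalA_coef_poly al (p_sym d)) /evalA.
by apply: mmap_ext => i; rewrite tnth_mktuple mmapX mmap1U liftK.
Qed.

Lemma msymXU n (s : {perm 'I_n}) (j : 'I_n) : msym s ('X_j : {mpoly int[n]}) = 'X_(s j).
Proof.
rewrite msymX; congr mpolyX; apply/mnmP => i; rewrite mnmE !mnm1E.
by congr nat_of_bool; apply/eqP/eqP => [->|<-]; rewrite ?permKV ?permK.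
Qed.

Section DiscriminantTerms.
Variables N r : nat.

Definition disc_term (t : {ffun 'I_(r + r) -> 'I_N}) : {mpoly int[N]} :=
  if injectiveb t then \prod_(nu < r) ('X_(t (lshift r nu)) - 'X_(t (rshift r nu))) else 0.

Lemma cnorm_disc_term (al : 'I_N -> CC) t :
  cnorm (mmap intr al (disc_term t)) =
  if injectiveb t then \prod_(nu < r) cdist (al (t (lshift r nu))) (al (t (rshift r nu))) else 0.
Proof.
rewrite /disc_term; case: ifP => _; last by rewrite rmorph0 cnorm0.
rewrite rmorph_prod cnorm_prod; apply: eq_bigr => nu _.
by rewrite rmorphB /= !mmapX !mmap1U.
Qed.

Lemma rdisc_maxnorm (al : 'I_N -> CC) :
  rdisc al r = maxnorm (fun t => mmap intr al (disc_term t)).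
Proof.
apply/le_anti/andP; split; apply: bigmax_le => [|t]; rewrite ?maxnorm_ge0 ?bigmax_ge_id //.
  by move=> t_inj; apply: le_trans (cnorm_le_maxnorm _ t); rewrite cnorm_disc_term t_inj.
by rewrite cnorm_disc_term; case: ifP => [t_inj|_] _; [apply: le_bigmax_cond | apply: bigmax_ge_id].
Qed.

Lemma msym_disc_term (s : {perm 'I_N}) t :
  msym s (disc_term t) = disc_term [ffun i => s (t i)].
Proof.
rewrite /disc_term.
have -> : injectiveb [ffun i => s (t i)] = injectiveb t.
  apply/injectiveP/injectiveP => t_inj x y; last by rewrite !ffunE => /perm_inj /t_inj.
  by move=> e; apply: t_inj; rewrite !ffunE e.
case: ifP => _; last by rewrite rmorph0.
rewrite rmorph_prod; apply: eq_bigr => nu _.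
by rewrite rmorphB /= !msymXU !ffunE.
Qed.

Definition disc_coef q := coef_poly (esymf disc_term q).

Lemma evalA_disc_coef (al : 'I_N -> CC) q :
  evalA al (disc_coef q) = esymf (fun t => mmap intr al (disc_term t)) q.
Proof.
rewrite evalA_coef_poly; first exact: (rmorph_esymf (mmap intr al : {rmorphism _ -> CC})).
apply/issymP => s; apply: (@esymf_fixed _ _ disc_term (msym s) (fun t => [ffun i => s (t i)])).
  move=> t1 t2 /ffunP e; apply/ffunP => i; move: (e i); rewrite !ffunE.
  exact: perm_inj.
exact: msym_disc_term.
Qed.

End DiscriminantTerms.

Section StarTerms.
Variables N k : nat.

Definition star_term (T : {set 'I_N}) : {poly {mpoly int[N]}} :=
  if #|T| == k.+1 then \prod_(b in T) ('X - ('X_b)%:P) else 0.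

Definition star_value (al : 'I_N -> CC) z T := (map_poly (mmap intr al) (star_term T)).[z].

Lemma cnorm_star_value al j T :
  cnorm (star_value al (al j) T) = if #|T| == k.+1 then star_prod al j T else 0.
Proof.
rewrite /star_value /star_term; case: ifP => _; last by rewrite rmorph0 horner0 cnorm0.
rewrite rmorph_prod horner_prod cnorm_prod; apply: eq_bigr => b _.
by rewrite rmorphB /= map_polyX map_polyC /= !hornerE mmapX mmap1U.
Qed.

Lemma prod_Lloc_sim_maxnorm al j : (k.+1 < N)%N ->
  sim 1 (2 ^+ k.+1) (\prod_(i < k.+1) Lloc al i j) (maxnorm (star_value al (al j))).
Proof.
move=> k_lt; split.
  rewrite mul1r; apply: bigmax_le => [|T _]; first by rewrite prodr_ge0 // => i _; apply: Lloc_ge0.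
  rewrite cnorm_star_value; case: eqP => [T_card|_]; first exact: star_prod_le_prod_Lloc.
  by rewrite prodr_ge0 // => i _; apply: Lloc_ge0.
have [T [T_card T_bound]] := exists_star_prod_ge al j k_lt.
apply: le_trans T_bound _; rewrite ler_wpM2l ?exprn_ge0 //.
by apply: le_trans (cnorm_le_maxnorm _ T); rewrite cnorm_star_value T_card eqxx.
Qed.

Lemma msym_star_term (s : {perm 'I_N}) T :
  map_poly (msym s) (star_term T) = star_term [set s b | b in T].
Proof.
rewrite /star_term card_imset; last exact: perm_inj.
case: ifP => _; last by rewrite rmorph0.
rewrite rmorph_prod big_imset /=; last by move=> x y _ _; apply: perm_inj.
by apply: eq_bigr => b _; rewrite rmorphB /= map_polyX map_polyC /= msymXU.
Qed.

Definition star_coef q := coef_polyZ (esymf star_term q).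

Lemma evalAZ_star_coef al z q : evalAZ al z (star_coef q) = esymf (star_value al z) q.
Proof.
rewrite evalAZ_coef_polyZ => [|d].
  rewrite -horner_evalE (rmorph_esymf (map_poly (mmap intr al))).
  exact: (rmorph_esymf (horner_eval z)).
apply/issymP => s.
have fixed : map_poly (msym s) (esymf star_term q) = esymf star_term q.
  apply: (@esymf_fixed _ _ star_term (map_poly (msym s)) (fun T => [set s b | b in T])).
    by apply: imset_inj; apply: perm_inj.
  exact: msym_star_term.
by rewrite -[in RHS]fixed coef_map.
Qed.

End StarTerms.

Lemma rdisc_sim_prod_Labs N : (0 < N)%N ->
  exists c1 c2 : RR, 0 < c1 /\ 0 < c2 /\
    forall (al : 'I_N -> CC) r, (r.*2 <= N)%N -> sim c1 c2 (rdisc al r) (\prod_(i < r) Labs al i).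
Proof.
move=> N_gt0; set K : RR := 2 ^+ (N.+1 * N).
have K_gt0 : 0 < K by rewrite exprn_gt0.
exists K^-1, 1; split; first by rewrite invr_gt0.
split=> //.
move=> al r r_le; split; last by rewrite mul1r rdisc_le_prod_Labs.
rewrite ler_pdivrMl //; apply: le_trans (prod_Labs_le_rdisc al N_gt0 r_le) _.
rewrite ler_wpM2r ?bigmax_ge_id // ler_eXn2l ?ltr1n //.
by apply: leq_mul; move: r_le; rewrite -addnn; lia.
Qed.

Lemma rdisc_sim_root_sum N r : (0 < N)%N ->
  exists h : nat, (0 < h)%N /\ exists D : 'I_h -> {mpoly int[N]},
  exists c1 c2 : RR, 0 < c1 /\ 0 < c2 /\ forall al : 'I_N -> CC,
    sim c1 c2 (rdisc al r) (\sum_(q < h) rootq (cnorm (evalA al (D q))) q.+1).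
Proof.
move=> N_gt0; pose I := {ffun 'I_(r + r) -> 'I_N}.
have I_gt0 : (0 < #|I|)%N by apply/card_gt0P; exists [ffun=> Ordinal N_gt0].
exists #|I|; split => //; exists (fun q => disc_coef N r q.+1).
have [c1 [c2 [c1_gt0 c2_gt0 sim_root_sum]]] := exists_sim_root_sum I_gt0.
exists c1, c2; split=> //; split=> // al.
by rewrite rdisc_maxnorm; under eq_bigr do rewrite evalA_disc_coef; apply: sim_root_sum.
Qed.

Lemma prod_Lloc_sim_root_sum N k : (k.+2 <= N)%N ->
  exists m : nat, (0 < m)%N /\ exists sg : 'I_m -> {mpoly int[N.+1]},
  exists c1 c2 : RR, 0 < c1 /\ 0 < c2 /\ forall (al : 'I_N -> CC) (j : 'I_N),
    sim c1 c2 (\prod_(i < k.+1) Lloc al i j)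
      (\sum_(i < m) rootq (cnorm (evalAZ al (al j) (sg i))) i.+1).
Proof.
move=> k_lt; pose I := {set 'I_N}.
have I_gt0 : (0 < #|I|)%N by apply/card_gt0P; exists set0.
exists #|I|; split => //; exists (fun q => star_coef N k q.+1).
have [c1 [c2 [c1_gt0 c2_gt0 sim_root_sum]]] := exists_sim_root_sum I_gt0.
exists (1 * c1), (2 ^+ k.+1 * c2); split; first by rewrite mul1r.
split=> [|al j]; first by rewrite mulr_gt0 ?exprn_gt0.
rewrite (eq_bigr (fun q : 'I_#|I| => rootq (cnorm (esymf (star_value k al (al j)) q.+1)) q.+1)).
  exact: sim_trans ler01 (exprn_ge0 _ (ler0n _ 2)) (prod_Lloc_sim_maxnorm al j k_lt)
    (sim_root_sum (star_value k al (al j))).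
by move=> q _; rewrite evalAZ_star_coef.
Qed.

Unset Implicit Arguments. Set Strict Implicit.

Theorem theorem2 (N : nat) (hN : (2 <= N)%N) :
  (* (i) *)
  (exists c1 c2 : RR, 0 < c1 /\ 0 < c2 /\
     forall al : 'I_N -> CC, exists j : 'I_N,
       forall i : nat, (i.*2 <= N)%N -> sim c1 c2 (Lloc al i j) (Labs al i))
  /\
  (* (ii) *)
  (exists c1 c2 : RR, 0 < c1 /\ 0 < c2 /\
     forall al : 'I_N -> CC, forall r : nat, (1 <= r)%N -> (r.*2 <= N)%N ->
       sim c1 c2 (rdisc al r) (\prod_(i < r) Labs al i))
  /\
  (* (iii) *)
  (forall r : nat, (1 <= r)%N -> (r.*2 <= N)%N ->
     exists h : nat, (0 < h)%N /\
     exists D : 'I_h -> mpoly.mpoly N int,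
     exists c1 c2 : RR, 0 < c1 /\ 0 < c2 /\
       forall al : 'I_N -> CC,
         sim c1 c2 (rdisc al r)
           (\sum_(q < h) rootq (cnorm (evalA al (D q))) q.+1))
  /\
  (* (iv) *)
  (forall k : nat, (k <= N - 2)%N ->
     exists m : nat, (0 < m)%N /\
     exists sg : 'I_m -> mpoly.mpoly N.+1 int,
     exists c1 c2 : RR, 0 < c1 /\ 0 < c2 /\
       forall al : 'I_N -> CC, forall j : 'I_N,
         sim c1 c2 (\prod_(i < k.+1) Lloc al i j)
           (\sum_(i < m) rootq (cnorm (evalAZ al (al j) (sg i))) i.+1)).
Proof.
have N_gt0 : (0 < N)%N by apply: leq_trans hN.
split.
  exists 1, 2; split; first exact: ltr01.
  split=> [|al]; first by rewrite ltr0n.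
  have [j Lloc_le] := exists_Lloc_le_2Labs al N_gt0.
  by exists j => i i_le; split; [rewrite mul1r; apply: Labs_le_Lloc | apply: Lloc_le].
split.
  have [c1 [c2 [c1_gt0 [c2_gt0 sim_rdisc]]]] := rdisc_sim_prod_Labs N_gt0.
  by exists c1, c2; split=> //; split=> // al r _; apply: sim_rdisc.
split; first by move=> r _ _; apply: rdisc_sim_root_sum.
by move=> k k_le; apply: prod_Lloc_sim_root_sum; rewrite -subn_gt0; lia.
Qed.
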